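(* Let $\Psi$ be a root subsystem of $\Phi$. (i) If $\Psi$ is saturated in $\Phi$, then for every $D\in\mathrm{Ch}_\Psi$ there exists at least one $C\in\mathrm{Ch}_\Phi$ lifting $D$. (ii) If some chamber $C\in\mathrm{Ch}_\Phi$ lifts some chamber $D\in\mathrm{Ch}_\Psi$, then $\Psi$ is saturated in $\Phi$.
   Context: $E$ is a finite-dimensional real Euclidean space with inner product $(\cdot,\cdot)$; $\Phi\subset E$ is a finite (reduced) root system (not necessarily spanning $E$, not necessarily crystallographic), with reflections $\omega_\alpha$ through $L_\alpha=\alpha^\perp$. A root subsystem is a nonempty $\Psi\subset\Phi$ stable under $\omega_\alpha$, $\alpha\in\Psi$. $\Psi$ is saturated in $\Phi$ if $\Psi=\mathbb R\Psi\cap\Phi$, where $\mathbb R\Psi$ is the real linear span. For $X\subset\Phi$, $\mathrm{Ch}_X$ is the set of connected components of $E\setminus\bigcup_{\alpha\in X}L_\alpha$. For $C\in\mathrm{Ch}_\Phi$, $\Phi^+(C)=\{\alpha\in\Phi:(e,\alpha)>0\ \forall e\in C\}$ and $\Phi^s(C)$ is the unique simple system of $\Phi$ contained in $\Phi^+(C)$ (a simple system is a linearly independent subset $S$ such that each root is a linear combination of elements of $S$ with all coefficients $\ge0$ or all $\le0$). Similarly $\Psi^+(D)$, $\Psi^s(D)$ for $D\in\mathrm{Ch}_\Psi$. A chamber $C\in\mathrm{Ch}_\Phi$ lifts $D\in\mathrm{Ch}_\Psi$ if $\Psi^s(D)\subset\Phi^s(C)$. *)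

From HB Require Import structures.
From mathcomp Require Import all_boot all_order all_algebra.
From mathcomp Require Import all_classical all_reals all_analysis.
Set Implicit Arguments. Unset Strict Implicit. Unset Printing Implicit Defensive.
Import Order.TTheory GRing.Theory Num.Theory numFieldNormedType.Exports.
Local Open Scope ring_scope.
Local Open Scope classical_set_scope.

Section RootDefs.
Variables (R : realType) (n : nat).
Notation E := 'rV[R]_n.

Definition dot (u v : E) : R := (u *m v^T) 0 0.

Definition refl (a x : E) : E := x - ((2 * dot x a) / dot a a) *: a.

(* finite reduced root system (not necessarily spanning, not nec. crystallographic) *)
Definition root_system (Phi : seq E) : Prop :=
  [/\ (0 : E) \notin Phi,
      (forall a b, a \in Phi -> b \in Phi -> refl a b \in Phi) &
      (forall a (c : R), a \in Phi -> c *: a \in Phi -> c = 1 \/ c = -1)].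

Definition root_subsystem (Phi Psi : seq E) : Prop :=
  [/\ Psi != [::], {subset Psi <= Phi} &
      (forall a b, a \in Psi -> b \in Psi -> refl a b \in Psi)].

Definition saturated (Phi Psi : seq E) : Prop :=
  forall a, a \in Phi -> (a \in <<Psi>>%VS <-> a \in Psi).

Definition simple_system (Phi S : seq E) : Prop :=
  [/\ {subset S <= Phi}, free S &
      forall a, a \in Phi -> exists c : E -> R,
        a = \sum_(s <- S) c s *: s /\
        ((forall s, s \in S -> 0 <= c s) \/ (forall s, s \in S -> c s <= 0))].

Definition regular (X : seq E) : set E := [set x | forall a, a \in X -> dot x a != 0].

Definition Ch (X : seq E) : set (set E) :=
  [set C | exists x, regular X x /\ C = connected_component (regular X) x].

Definition pos (Phi : seq E) (C : set E) : seq E :=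
  [seq a <- Phi | `[< forall e, C e -> 0 < dot e a >]].

(* Phi^s(C): the (unique) simple system of Phi contained in Phi^+(C) *)
Definition simple_of (Phi : seq E) (C : set E) : set E :=
  [set a | a \in xget [::] [set S | simple_system Phi S /\ {subset S <= pos Phi C}]].

Definition lifts (Phi Psi : seq E) (C D : set E) : Prop :=
  simple_of Psi D `<=` simple_of Phi C.

End RootDefs.

From HB Require Import structures.
From mathcomp Require Import all_boot all_order all_algebra.
From mathcomp Require Import all_classical all_reals all_analysis.
From mathcomp Require Import ring lra.
Import Order.TTheory GRing.Theory Num.Theory numFieldNormedType.Exports.
Local Open Scope ring_scope.
Local Open Scope classical_set_scope.

(* Roots positive at a regular point x span a cone; an irredundant set of
   generators of that cone is pairwise obtuse (otherwise reflecting one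
   generator in another decomposes a generator), hence linearly independent,
   hence a simple system.
   (ii) If the simple system J of a chamber of Psi lies in the simple system S
   of a chamber of Phi, a root in the span of Psi has sign-coherent
   J-coordinates, and reflecting it in elements of J lowers its height at the
   chamber until it becomes an element of J; so it lies in Psi.
   (i) If Psi is saturated, pick p orthogonal to Psi and to no other root, and
   y in the chamber D; then x = p + e y is regular for small e > 0. Each a in J
   is a nonnegative combination of the simple roots of Phi at x; pairing with p
   shows that they all lie in Psi, hence are nonnegative combinations of J, and
   freeness of J forces one of them to be a itself. *)

Set Implicit Arguments.
Unset Strict Implicit.
Unset Printing Implicit Defensive.

Section RealFacts.
Variable R : realDomainType.
Implicit Types u v : R.

Lemma addr_neq0_dominant u v : `|v| < `|u| -> u + v != 0.
Proof.
by apply: contraTneq => /eqP; rewrite addr_eq0 => /eqP ->; rewrite normrN ltxx.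
Qed.

Lemma addr_gt0_dominant u v : `|v| < `|u| -> 0 < u + v -> 0 < u.
Proof.
move=> vu uv; rewrite ltNge; apply/negP => u0.
by move: vu; rewrite (ler0_norm u0); have := ler_norm v; lra.
Qed.

Lemma psumr_seq_eq0 (I : eqType) (r : seq I) (F : I -> R) :
  (forall i, i \in r -> 0 <= F i) -> \sum_(i <- r) F i = 0 ->
  forall i, i \in r -> F i = 0.
Proof.
move=> F0 /eqP; rewrite big_seq psumr_eq0 // => /allP F_eq0 i ir.
by apply/eqP; move: (F_eq0 i ir); rewrite ir.
Qed.

Lemma sumr_gt0_has (I : eqType) (r : seq I) (F : I -> R) :
  0 < \sum_(i <- r) F i -> exists2 i, i \in r & 0 < F i.
Proof.
move=> sum_gt0; apply/hasP; apply: contraTT sum_gt0 => /hasPn F_le0.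
by rewrite -leNgt big_seq sumr_le0 // => i /F_le0; rewrite -leNgt.
Qed.

Lemma exists_notin_seq (B : seq R) : exists t, t \notin B.
Proof.
suff [M HM] : exists M, forall z, z \in B -> z < M.
  by exists M; apply/negP => /HM; rewrite ltxx.
elim: B => [|z B [M HM]]; first by exists 0.
exists (Num.max M (z + 1)) => w; rewrite inE lt_max => /orP[/eqP ->|/HM ->//].
by rewrite ltrDl ltr01 orbT.
Qed.

End RealFacts.

Lemma sub_count_lt (T : eqType) (P Q : pred T) (s : seq T) :
  subpred P Q -> (exists2 z, z \in s & Q z && ~~ P z) ->
  (count P s < count Q s)%N.
Proof.
move=> PQ; elim: s => [|z s IH]; first by case.
case=> w; rewrite inE => /orP[/eqP ->|ws] hw /=.
  case/andP: hw => -> /negbTE ->; rewrite add0n add1n ltnS.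
  exact: sub_count.
have := IH (ex_intro2 _ _ w ws hw).
case Pz: (P z); first by rewrite (PQ _ Pz).
by case: (Q z) => /= h; rewrite ?add0n ?add1n //; apply: ltnW.
Qed.

Section InnerProduct.
Context {R : realType} {n : nat}.
Notation E := 'rV[R]_n.
Implicit Types (a b u v w x : E).

Lemma dotE u v : dot u v = \sum_i u 0 i * v 0 i.
Proof. by rewrite /dot !mxE; apply: eq_bigr => i _; rewrite mxE. Qed.

Lemma dotC u v : dot u v = dot v u.
Proof. by rewrite !dotE; apply: eq_bigr => i _; rewrite mulrC. Qed.

Lemma dotDl u v w : dot (u + v) w = dot u w + dot v w.
Proof. by rewrite !dotE -big_split; apply: eq_bigr => i _; rewrite mxE mulrDl. Qed.

Lemma dotZl k u v : dot (k *: u) v = k * dot u v.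
Proof. by rewrite !dotE mulr_sumr; apply: eq_bigr => i _; rewrite mxE mulrA. Qed.

Lemma dotNl u v : dot (- u) v = - dot u v.
Proof. by rewrite -scaleN1r dotZl mulN1r. Qed.

Lemma dotBl u v w : dot (u - v) w = dot u w - dot v w.
Proof. by rewrite dotDl dotNl. Qed.

Lemma dot0l v : dot 0 v = 0.
Proof. by rewrite -(scale0r 0) dotZl mul0r. Qed.

Lemma dotDr u v w : dot w (u + v) = dot w u + dot w v.
Proof. by rewrite !(dotC w) dotDl. Qed.

Lemma dotZr k u v : dot v (k *: u) = k * dot v u.
Proof. by rewrite !(dotC v) dotZl. Qed.

Lemma dotNr u v : dot v (- u) = - dot v u.
Proof. by rewrite !(dotC v) dotNl. Qed.

Lemma dot0r v : dot v 0 = 0.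
Proof. by rewrite dotC dot0l. Qed.

Lemma dot_suml (I : Type) (r : seq I) (P : pred I) (F : I -> E) v :
  dot (\sum_(i <- r | P i) F i) v = \sum_(i <- r | P i) dot (F i) v.
Proof.
elim: r => [|i r IH]; first by rewrite !big_nil dot0l.
by rewrite !big_cons; case: (P i) => //; rewrite dotDl IH.
Qed.

Lemma dot_sumr (I : Type) (r : seq I) (P : pred I) (F : I -> E) v :
  dot v (\sum_(i <- r | P i) F i) = \sum_(i <- r | P i) dot v (F i).
Proof. by rewrite dotC dot_suml; apply: eq_bigr => i _; rewrite dotC. Qed.

Lemma dot_ge0 v : 0 <= dot v v.
Proof. by rewrite dotE sumr_ge0 // => i _; rewrite -expr2 sqr_ge0. Qed.

Lemma dot_eq0 v : dot v v = 0 -> v = 0.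
Proof.
rewrite dotE => v0; apply/rowP => i; rewrite mxE.
have : v 0 i * v 0 i = 0.
  apply: (psumr_eq0P (P := predT) (F := fun i => v 0 i * v 0 i)) => // j _.
  by rewrite -expr2 sqr_ge0.
by move/eqP; rewrite mulf_eq0 orbb => /eqP.
Qed.

Lemma dot_gt0 v : v != 0 -> 0 < dot v v.
Proof. by move=> v_neq0; rewrite lt_def dot_ge0 andbT; apply: contra_neq v_neq0 => /dot_eq0. Qed.

Lemma continuous_dot a : continuous (fun e : E => dot e a).
Proof.
have -> : (fun e : E => dot e a) = (fun e => \sum_(i <- index_enum 'I_n) a 0 i * e 0 i).
  by apply: funext => e; rewrite dotE; apply: eq_bigr => i _; rewrite mulrC.
apply: continuous_big; first exact: add_continuous.
move=> i _ e; have coord_cont := @coord_continuous R 1 n 0 i e.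
have mul_cont := @mulrl_continuous R (a 0 i) (e 0 i).
exact: (continuous_comp coord_cont mul_cont).
Qed.

(* Intermediate values on the connected component, where [dot _ a] has no zero. *)
Lemma connected_component_dot_gt0 (X : seq E) x e a : a \in X -> regular X x ->
  connected_component (regular X) x e -> 0 < dot x a -> 0 < dot e a.
Proof.
move=> aX rx xe xa.
have ne z : connected_component (regular X) x z -> dot z a != 0.
  by move=> /connected_component_sub; apply.
have /connected_intervalP ivt := connected_continuous_connected
  (@component_connected _ (regular X) x) (continuous_subspaceT (continuous_dot (a := a))).
rewrite lt_def (ne _ xe) /= leNgt; apply/negP => ea.
have : [set dot z a | z in connected_component (regular X) x] 0.
  apply: (ivt (dot e a) (dot x a)); first by exists e.
    by exists x => //; exact: connected_component_refl.
  by rewrite (ltW ea) ltW.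
by case=> z xz /eqP; apply/negP; apply: ne.
Qed.

Lemma refl_self a : a != 0 -> refl a a = - a.
Proof.
move=> a_neq0; rewrite /refl -mulrA divff ?mulr1; last by rewrite gt_eqF // dot_gt0.
by rewrite scaler_nat mulr2n opprD addrA subrr add0r.
Qed.

Lemma reflK a : a != 0 -> involutive (refl a).
Proof.
move=> a_neq0 b; have aa : dot a a != 0 by rewrite gt_eqF // dot_gt0.
have dot_refl : dot (refl a b) a = - dot b a.
  by rewrite /refl dotBl dotZl -mulrA mulVf // mulr1; ring.
by rewrite {1}/refl dot_refl /refl mulrN mulNr scaleNr opprK subrK.
Qed.

Lemma dot_reflr x a b : dot x (refl a b) = dot x b - (2 * dot b a / dot a a) * dot x a.
Proof. by rewrite /refl dotC dotBl dotZl !(dotC x). Qed.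

End InnerProduct.

Section LinearCombinations.
Context {R : realType} {n : nat}.
Notation E := 'rV[R]_n.
Implicit Types (S T : seq E) (c d : E -> R).

Definition lc S c : E := \sum_(s <- S) c s *: s.

Lemma lc_nil c : lc [::] c = 0.
Proof. by rewrite /lc big_nil. Qed.

Lemma lc_cons s S c : lc (s :: S) c = c s *: s + lc S c.
Proof. by rewrite /lc big_cons. Qed.

Lemma dot_lc x S c : dot x (lc S c) = \sum_(s <- S) c s * dot x s.
Proof. by rewrite /lc dot_sumr; apply: eq_bigr => s _; rewrite dotZr. Qed.

Lemma eq_lc S c d : {in S, c =1 d} -> lc S c = lc S d.
Proof.
by by move=> cd; rewrite /lc !big_seq; apply: eq_bigr => s /cd ->.
Qed.

Lemma lc0 S : lc S (fun _ => 0) = 0.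
Proof. by rewrite /lc big1 // => s _; rewrite scale0r. Qed.

Lemma lcD S c d : lc S (fun s => c s + d s) = lc S c + lc S d.
Proof. by rewrite /lc -big_split; apply: eq_bigr => s _; rewrite scalerDl. Qed.

Lemma lcN S c : lc S (fun s => - c s) = - lc S c.
Proof. by rewrite /lc -sumrN; apply: eq_bigr => s _; rewrite scaleNr. Qed.

Lemma lcB S c d : lc S (fun s => c s - d s) = lc S c - lc S d.
Proof. by rewrite /lc -sumrB; apply: eq_bigr => s _; rewrite scalerBl. Qed.

Lemma lcZ S k c : lc S (fun s => k * c s) = k *: lc S c.
Proof. by rewrite /lc scaler_sumr; apply: eq_bigr => s _; rewrite scalerA. Qed.

Lemma lc_rem S c s : uniq S -> s \in S -> lc S c = c s *: s + lc (rem s S) c.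
Proof. by move=> uS sS; rewrite /lc (perm_big _ (perm_to_rem sS)) big_cons. Qed.

Lemma lc_single S c s : uniq S -> s \in S ->
  (forall t, t \in S -> t != s -> c t = 0) -> lc S c = c s *: s.
Proof.
move=> uS sS c0; rewrite (lc_rem _ uS sS) (@eq_lc _ _ (fun _ => 0)) ?lc0 ?addr0 // => t.
by rewrite mem_rem_uniq // inE => /andP[ts /c0]; apply.
Qed.

Lemma lc_delta S s : uniq S -> s \in S -> lc S (fun t => (t == s)%:R) = s.
Proof.
move=> uS sS; rewrite (lc_single uS sS) ?eqxx ?scale1r // => t _.
by move/negbTE ->.
Qed.

Lemma lc_in_span S c : lc S c \in <<S>>%VS.
Proof. by rewrite /lc big_seq; apply: memv_suml => s sS; rewrite memvZ ?memv_span. Qed.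

Lemma span_lc S v : uniq S -> v \in <<S>>%VS -> exists c, v = lc S c.
Proof.
elim: S v => [|s S IH] v /=.
  by move=> _; rewrite span_nil memv0 => /eqP ->; exists (fun _ => 0); rewrite lc_nil.
case/andP => sS uS; rewrite span_cons => /memv_addP [y /vlineP [k ->]] [z zS ->].
have [c ->] := IH z uS zS.
exists (fun t => if t == s then k else c t); rewrite lc_cons eqxx; congr (_ + _).
by apply: eq_lc => t tS; case: eqP => // ts; rewrite -ts tS in sS.
Qed.

Lemma lc_sub S T c : uniq S -> uniq T -> {subset S <= T} ->
  lc T (fun t => if t \in S then c t else 0) = lc S c.
Proof.
move=> uS uT ST; rewrite /lc (bigID (mem S)) /= [X in _ + X]big1 ?addr0; last first.
  by move=> t /negbTE ->; rewrite scale0r.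
rewrite -big_filter (eq_big_seq (fun t => c t *: t)); last first.
  by move=> t; rewrite mem_filter => /andP[-> _].
apply/perm_big/uniq_perm; rewrite ?filter_uniq // => t.
by rewrite mem_filter andb_idr //; apply: ST.
Qed.

Lemma free_lc_inj S c d : free S -> lc S c = lc S d -> {in S, c =1 d}.
Proof.
move=> fS cd s sS; apply/eqP; rewrite -subr_eq0; apply/eqP.
have : lc S (fun s => c s - d s) = 0 by rewrite lcB cd subrr.
rewrite /lc (big_nth 0) big_mkord => lcB0.
have sS' : (index s S < size S)%N by rewrite index_mem.
have := (@freeP _ _ _ (in_tuple S)) fS _ lcB0 (Ordinal sS').
by rewrite /= nth_index.
Qed.

Lemma lc0_free S : uniq S -> (forall c, lc S c = 0 -> {in S, c =1 fun _ => 0}) -> free S.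
Proof.
move=> uS S0; apply/(@freeP _ _ _ (in_tuple S)) => k k0 i.
pose kn j : R := if insub j is Some i' then k i' else 0.
have := S0 (fun s => kn (index s S)).
have -> : lc S (fun s => kn (index s S)) = 0.
  rewrite -k0 /lc (big_nth 0) big_mkord; apply: eq_bigr => j _.
  by rewrite index_uniq // /kn valK.
move=> /(_ erefl (nth 0 S i) (mem_nth _ (ltn_ord i))).
by rewrite index_uniq // /kn valK.
Qed.

End LinearCombinations.

Section Roots.
Context {R : realType} {n : nat}.
Notation E := 'rV[R]_n.
Implicit Types (Phi : seq E) (a : E).

Definition refl_closed Phi := forall a b, a \in Phi -> b \in Phi -> refl a b \in Phi.

Definition reduced Phi := forall a (c : R), a \in Phi -> c *: a \in Phi -> c = 1 \/ c = -1.

Lemma refl_closedN Phi a : refl_closed Phi -> a != 0 -> a \in Phi -> - a \in Phi.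
Proof. by move=> clPhi a_neq0 aPhi; rewrite -refl_self //; apply: clPhi. Qed.

Lemma root_pos_multiple Phi a k : reduced Phi -> a \in Phi -> k *: a \in Phi -> 0 < k ->
  k *: a = a.
Proof.
move=> redPhi aPhi kaPhi k0.
case: (redPhi a k aPhi kaPhi) => k1; first by rewrite k1 scale1r.
by move: k0; rewrite k1 ltNge lerN10.
Qed.

End Roots.

Section Cones.
Context {R : realType} {n : nat}.
Notation E := 'rV[R]_n.
Implicit Types (D : seq E) (u v x : E).

Definition cone D v := exists c : E -> R, (forall s, s \in D -> 0 <= c s) /\ v = lc D c.

Lemma cone0 D : cone D 0.
Proof. by exists (fun _ => 0); rewrite lc0. Qed.

Lemma coneD D u v : cone D u -> cone D v -> cone D (u + v).
Proof.
move=> [c [c0 ->]] [d [d0 ->]]; exists (fun s => c s + d s); rewrite lcD.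
by split=> // s sD; rewrite addr_ge0 ?c0 ?d0.
Qed.

Lemma coneZ D k v : 0 <= k -> cone D v -> cone D (k *: v).
Proof.
move=> k0 [c [c0 ->]]; exists (fun s => k * c s); rewrite lcZ.
by split=> // s sD; rewrite mulr_ge0 ?c0.
Qed.

Lemma cone_mem D s : uniq D -> s \in D -> cone D s.
Proof. by move=> uD sD; exists (fun t => (t == s)%:R); rewrite lc_delta. Qed.

Lemma cone_trans D D' v : (forall s, s \in D -> cone D' s) -> cone D v -> cone D' v.
Proof.
elim: D v => [|s D IH] v DD' [c [c0 ->]]; first by rewrite lc_nil; apply: cone0.
rewrite lc_cons; apply: coneD.
  by apply: coneZ; [exact: c0 (mem_head _ _) | exact: DD' (mem_head _ _)].
apply: IH => [t tD|]; first by apply: DD'; rewrite inE tD orbT.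
by exists c; split=> // t tD; rewrite c0 // inE tD orbT.
Qed.

Lemma cone_dot_ge0 x D v : (forall s, s \in D -> 0 < dot x s) -> cone D v -> 0 <= dot x v.
Proof.
move=> xD [c [c0 ->]]; rewrite dot_lc big_seq sumr_ge0 // => s sD.
by rewrite mulr_ge0 ?c0 // ltW ?xD.
Qed.

Lemma simple_system_cone (X S : seq E) x a : simple_system X S ->
  (forall s, s \in S -> 0 < dot x s) -> a \in X -> 0 < dot x a -> cone S a.
Proof.
move=> [_ _ coh] xS aX xa; have [c [ac [c0|c0]]] := coh a aX; first by exists c.
have : dot x (lc S c) <= 0.
  by rewrite dot_lc big_seq sumr_le0 // => s sS; rewrite mulr_le0_ge0 ?c0 // ltW ?xS.
by rewrite -[lc S c]ac; lra.
Qed.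

(* Substitute the [J]-expansions of the [s] into [a = sum c_s s] and compare
   coordinates in the basis [J]: the coordinate 1 at [a] comes from some [s],
   and that [s] has no other [J]-coordinate. *)
Lemma simplicial_extreme_ray (J S : seq E) (a : E) (c : E -> R) : free J -> a \in J ->
  a = lc S c -> (forall s, s \in S -> 0 <= c s) ->
  (forall s, s \in S -> 0 < c s -> cone J s) ->
  exists2 s, s \in S & exists2 k, 0 < k & s = k *: a.
Proof.
move=> fJ aJ ac c0 SJ; have uJ := free_uniq fJ.
have c_gt0 s : s \in S -> c s != 0 -> 0 < c s by move=> sS cs; rewrite lt0r cs c0.
have /choice[d dP] : forall s, exists d : E -> R, s \in S -> 0 < c s ->
    (forall j, j \in J -> 0 <= d j) /\ s = lc J d.
  move=> s; have [[sS cs]|] := pselect (s \in S /\ 0 < c s).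
    by have [d dJ] := SJ s sS cs; exists d.
  by move=> Scs; exists (fun _ => 0) => sS cs; exfalso; apply: Scs.
pose f j := \sum_(s <- S) c s * d s j.
have af : a = lc J f.
  rewrite ac /lc /f; under [RHS]eq_bigr => j _ do rewrite scaler_suml.
  rewrite exchange_big /=; apply: eq_big_seq => s sS.
  under [RHS]eq_bigr => j _ do rewrite -scalerA; rewrite -scaler_sumr.
  have [->|cs] := eqVneq (c s) 0; first by rewrite !scale0r.
  by congr (_ *: _); exact: (dP s sS (c_gt0 s sS cs)).2.
have fE : {in J, f =1 fun j => (j == a)%:R} by apply: free_lc_inj; rewrite -?af ?lc_delta.
have cd_ge0 s j : s \in S -> j \in J -> 0 <= c s * d s j.
  move=> sS jJ; have [->|cs] := eqVneq (c s) 0; first by rewrite mul0r.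
  by rewrite mulr_ge0 ?c0 ?(dP s sS (c_gt0 s sS cs)).1.
have [s sS csa] : exists2 s, s \in S & 0 < c s * d s a.
  by apply: sumr_gt0_has; rewrite -/(f a) fE ?eqxx ?ltr01.
have cs : 0 < c s by apply: c_gt0 => //; apply: contraTneq csa => ->; rewrite mul0r ltxx.
have [_ sd] := dP s sS cs.
exists s => //; exists (d s a); first by rewrite -(pmulr_rgt0 _ cs).
rewrite {1}sd (lc_single uJ aJ) // => j jJ ja.
have fj0 : \sum_(t <- S) c t * d t j = 0 by rewrite -/(f j) fE // (negbTE ja).
have /eqP := psumr_seq_eq0 (fun t tS => cd_ge0 t j tS jJ) fj0 sS.
by rewrite mulf_eq0 (gt_eqF cs) => /eqP.
Qed.

End Cones.

Section SimpleSystemExists.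
Context {R : realType} {n : nat}.
Notation E := 'rV[R]_n.
Variables (Phi : seq E) (x : E).
Hypotheses (clPhi : refl_closed Phi) (rx : regular Phi x).

Let P := [seq a <- Phi | 0 < dot x a].

Let P_gt0 s : s \in P -> 0 < dot x s.
Proof. by rewrite mem_filter => /andP[]. Qed.

Let P_sub : {subset P <= Phi}.
Proof. by move=> s; rewrite mem_filter => /andP[]. Qed.

Let root_neq0 a : a \in Phi -> a != 0.
Proof. by move=> /rx; apply: contraNneq => ->; rewrite dot0r. Qed.

Let opp_in_P a : a \in Phi -> dot x a < 0 -> - a \in P.
Proof. by move=> aPhi xa; rewrite mem_filter refl_closedN ?root_neq0 // dotNr oppr_gt0 xa. Qed.

Definition positive_generators D :=
  [/\ uniq D, {subset D <= P} & forall v, v \in P -> cone D v].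

Definition irredundant (D : seq E) := forall b, b \in D -> ~ cone (rem b D) b.

Lemma exists_irredundant_generators : exists D, positive_generators D /\ irredundant D.
Proof.
suff gen_min D : positive_generators D -> exists D', positive_generators D' /\ irredundant D'.
  apply: (gen_min (undup P)); split=> [|s|v vP]; rewrite ?undup_uniq ?mem_undup //.
  by apply: cone_mem; rewrite ?undup_uniq ?mem_undup.
have [N] := ubnP (size D); elim: N D => // N IH D DN gD.
have [[b bD b_cone]|irrD] := pselect (exists2 b, b \in D & cone (rem b D) b); last first.
  by exists D; split=> // b bD b_cone; apply: irrD; exists b.
case: gD => uD DP PD; have D_gt0 : (0 < size D)%N by case: (D) bD.
apply: (IH (rem b D)); first by rewrite size_rem // -ltnS prednK.
split=> [|s /mem_rem /DP //|v /PD]; first exact: rem_uniq.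
apply: cone_trans => s sD; have [->//|sb] := eqVneq s b.
by apply: cone_mem; rewrite ?rem_uniq // mem_rem_uniq // inE sb.
Qed.

Section Irredundant.
Variable D : seq E.
Hypotheses (gD : positive_generators D) (irrD : irredundant D).

Let D_gt0 s : s \in D -> 0 < dot x s.
Proof. by case: gD => _ DP _ /DP /P_gt0. Qed.

Let D_Phi s : s \in D -> s \in Phi.
Proof. by case: gD => _ DP _ /DP /P_sub. Qed.

Lemma generator_indecomposable u t w c : u \in D -> 0 < t ->
  cone (rem u D) w -> 0 < dot x w -> (forall s, s \in D -> 0 <= c s) ->
  t *: u != w + lc D c.
Proof.
case: gD => uD _ _ uD' t0 w_cone xw c0; apply/eqP => tu.
have remD s : s \in rem u D -> s \in D by move/mem_rem.
have rem_cone : cone (rem u D) (lc (rem u D) c) by exists c; split=> // s /remD /c0.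
have tcu : (t - c u) *: u = w + lc (rem u D) c.
  by rewrite scalerBl tu (lc_rem _ uD uD') addrCA addrAC subrr add0r.
have [cu_lt|cu_ge] := ltP (c u) t.
  apply: (irrD uD'); have u_eq : u = (t - c u)^-1 *: (w + lc (rem u D) c).
    by rewrite -tcu scalerA mulVf ?scale1r // subr_eq0 gt_eqF.
  rewrite [X in cone _ X]u_eq.
  by apply: coneZ; [rewrite invr_ge0 subr_ge0; exact: ltW | exact: coneD].
have := congr1 (dot x) tcu; rewrite dotZr dotDr.
have : (t - c u) * dot x u <= 0 by rewrite mulr_le0_ge0 ?subr_le0 // ltW ?D_gt0.
have : 0 <= dot x (lc (rem u D) c) by apply: cone_dot_ge0 rem_cone => s /remD /D_gt0.
lra.
Qed.

(* If [(a, b) > 0], then [refl a b = b - k a] with [k > 0] is a root; whichever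
   of [refl a b] and [- refl a b] is positive contradicts irredundancy. *)
Lemma irredundant_dot_le0 a b : a \in D -> b \in D -> a != b -> dot a b <= 0.
Proof.
case: (gD) => uD DP PD aD bD ab; rewrite leNgt; apply/negP => ab_gt0.
have aa : 0 < dot a a by rewrite dot_gt0 ?root_neq0 ?D_Phi.
pose k := 2 * dot b a / dot a a.
have k_gt0 : 0 < k by rewrite divr_gt0 // mulr_gt0 // dotC.
have g_Phi : refl a b \in Phi by rewrite clPhi ?D_Phi.
have cone_rem s t : s \in D -> t != s -> cone (rem t D) s.
  by move=> sD ts; apply: cone_mem; rewrite ?rem_uniq // mem_rem_uniq // inE eq_sym ts.
have := rx g_Phi; rewrite neq_lt => /orP[g_lt0|g_gt0].
  have [c [c0 cg]] := PD _ (opp_in_P g_Phi g_lt0).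
  apply: (negP (generator_indecomposable aD k_gt0 (cone_rem b a bD ab) (D_gt0 bD) c0)).
  by rewrite -cg /refl opprB addrC subrK.
have g_P : refl a b \in P by rewrite mem_filter g_Phi g_gt0.
have [c [c0 cg]] := PD _ g_P.
apply: (negP (generator_indecomposable bD ltr01 _ _ c0)).
- by apply: coneZ (ltW k_gt0) (cone_rem a b aD _); rewrite eq_sym.
- by rewrite dotZr mulr_gt0 ?D_gt0.
- by rewrite -cg scale1r /refl addrC subrK.
Qed.

(* Split a vanishing combination into its positive part [v] and the rest [w]:
   [v = - w] and [(v, w) >= 0] by obtuseness, so [v = 0], and pairing with [x]
   kills the positive coefficients. *)
Lemma irredundant_lc0_le0 c : lc D c = 0 -> forall s, s \in D -> c s <= 0.
Proof.
move=> Dc0; pose v := \sum_(s <- D | 0 < c s) c s *: s.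
pose w := \sum_(s <- D | ~~ (0 < c s)) c s *: s.
have vw : v + w = 0 by rewrite -Dc0 /lc (bigID (fun s => 0 < c s)).
have vw_ge0 : 0 <= dot v w.
  rewrite dot_suml big_seq_cond sumr_ge0 // => s /andP[sD cs].
  rewrite dotZl dot_sumr big_seq_cond; apply: mulr_ge0; first exact: ltW.
  apply: sumr_ge0 => t /andP[tD ct].
  rewrite dotZr; apply: mulr_le0; first by rewrite leNgt.
  by apply: irredundant_dot_le0 => //; apply: contraNneq ct => <-.
have v0 : v = 0.
  apply: dot_eq0; apply/eqP; rewrite eq_le dot_ge0 andbT.
  have wv : w = - v by apply/eqP; rewrite -addr_eq0 addrC vw.
  by move: vw_ge0; rewrite wv dotNr oppr_ge0.
have xv : \sum_(s <- D | 0 < c s) c s * dot x s = 0.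
  by rewrite -[RHS](dot0r x) -v0 /v dot_sumr; apply: eq_bigr => s _; rewrite dotZr.
move=> s sD; rewrite leNgt; apply/negP => cs.
have : c s * dot x s = 0.
  apply: (@psumr_seq_eq0 _ _ [seq t <- D | 0 < c t] (fun t => c t * dot x t)).
  - by move=> t; rewrite mem_filter => /andP[ct tD]; rewrite mulr_ge0 ?ltW ?D_gt0.
  - by rewrite big_filter.
  - by rewrite mem_filter cs.
by move/eqP; rewrite mulf_eq0 (gt_eqF cs) (gt_eqF (D_gt0 sD)).
Qed.

Lemma irredundant_free : free D.
Proof.
case: gD => uD _ _; apply: lc0_free => // c Dc0 s sD; apply/eqP.
rewrite eq_le irredundant_lc0_le0 //= -oppr_le0.
by apply: (irredundant_lc0_le0 (c := fun t => - c t)); rewrite ?lcN ?Dc0 ?oppr0.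
Qed.

End Irredundant.

Lemma exists_simple_system :
  exists S, simple_system Phi S /\ forall s, s \in S -> 0 < dot x s.
Proof.
have [D [gD irrD]] := exists_irredundant_generators; case: (gD) => uD DP PD.
exists D; split; last by move=> s /DP /P_gt0.
split; [by move=> s /DP /P_sub | exact: irredundant_free |].
move=> a aPhi; have := rx aPhi; rewrite neq_lt => /orP[xa|xa].
  have [c [c0 ac]] := PD _ (opp_in_P aPhi xa); exists (fun s => - c s); split.
    by rewrite -[a]opprK ac -lcN.
  by right=> s /c0; rewrite oppr_le0.
have aP : a \in P by rewrite mem_filter aPhi xa.
by have [c [c0 ac]] := PD _ aP; exists c; split=> //; left.
Qed.

End SimpleSystemExists.

Section Chambers.
Context {R : realType} {n : nat}.
Notation E := 'rV[R]_n.

Definition simple_seq (X : seq E) (C : set E) : seq E :=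
  xget [::] [set S | simple_system X S /\ {subset S <= pos X C}].

Lemma simple_seq_spec (X : seq E) x : refl_closed X -> regular X x ->
  simple_system X (simple_seq X (connected_component (regular X) x)) /\
  forall s, s \in simple_seq X (connected_component (regular X) x) -> 0 < dot x s.
Proof.
move=> clX rx; set C := connected_component (regular X) x.
have : exists S, simple_system X S /\ {subset S <= pos X C}.
  have [S [sS xS]] := exists_simple_system clX rx.
  exists S; split=> // s sS'; case: (sS) => SX _ _; rewrite mem_filter (SX _ sS') andbT.
  by apply/asboolP => e xe; apply: connected_component_dot_gt0 (SX _ sS') rx xe (xS _ sS').
move=> /(xgetPex [::]) [sS Spos].
split=> // s /Spos; rewrite mem_filter => /andP[/asboolP s_gt0 _].
by apply: s_gt0; apply: connected_component_refl.
Qed.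

End Chambers.

Section SubSimpleSystem.
Context {R : realType} {n : nat}.
Notation E := 'rV[R]_n.

Lemma simple_system_span (X S : seq E) : simple_system X S -> (<<X>> <= <<S>>)%VS.
Proof.
case=> _ _ coh; apply/span_subvP => a aX; have [c [-> _]] := coh a aX.
exact: lc_in_span.
Qed.

(* Coordinates on a subsequence [J] of a simple system are coordinates on the
   whole simple system, hence sign-coherent. *)
Lemma simple_system_sub_coherent (X S J : seq E) b d : simple_system X S ->
  uniq J -> {subset J <= S} -> b \in X -> b = lc J d ->
  (forall j, j \in J -> 0 <= d j) \/ (forall j, j \in J -> d j <= 0).
Proof.
move=> [_ fS coh] uJ JS bX bd; have [c [bc c_coh]] := coh b bX.
have cd : {in J, c =1 d}.
  move=> j jJ; have := @free_lc_inj _ _ S c (fun t => if t \in J then d t else 0) fS.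
  rewrite (lc_sub _ uJ (free_uniq fS) JS) -bd => /(_ (esym bc) j (JS _ jJ)).
  by rewrite jJ.
by case: c_coh => c_sgn; [left|right] => j jJ; rewrite -cd // c_sgn ?JS.
Qed.

Variables (Phi Psi S J : seq E) (x : E).
Hypotheses (Phi0 : 0 \notin Phi) (clPhi : refl_closed Phi) (redPhi : reduced Phi).
Hypotheses (clPsi : refl_closed Psi).
Hypotheses (sS : simple_system Phi S) (xS : forall s, s \in S -> 0 < dot x s).
Hypotheses (uJ : uniq J) (JS : {subset J <= S}) (JPsi : {subset J <= Psi}).

Let root_neq0 a : a \in Phi -> a != 0.
Proof. by apply: contraTneq => ->. Qed.

Let J_Phi j : j \in J -> j \in Phi.
Proof. by case: sS => SPhi _ _ /JS /SPhi. Qed.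

Let below (a : E) := count (fun b => dot x b < dot x a) Phi.

Lemma below_refl a s : s \in J -> refl s a \in Phi -> 0 < dot a s ->
  (below (refl s a) < below a)%N.
Proof.
move=> sJ g_Phi as_gt0.
have lt_a : dot x (refl s a) < dot x a.
  rewrite dot_reflr ltrBlDr ltrDl mulr_gt0 ?xS ?JS // divr_gt0 ?mulr_gt0 //.
  by rewrite dot_gt0 ?root_neq0 ?J_Phi.
apply: sub_count_lt => [b /lt_trans|]; first exact.
by exists (refl s a); rewrite // ltxx andbT.
Qed.

Lemma refl_cone a s t c : a \in Phi -> s \in J -> t \in J -> t != s -> 0 < c t ->
  a = lc J c -> cone J (refl s a).
Proof.
move=> aPhi sJ tJ ts ct ac; set k := 2 * dot a s / dot s s.
have ga : refl s a = lc J (fun u => c u - k * (u == s)%:R) by rewrite lcB lcZ lc_delta // -ac.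
have [cg_ge0|cg_le0] := simple_system_sub_coherent sS uJ JS (clPhi (J_Phi sJ) aPhi) ga.
  by exists (fun u => c u - k * (u == s)%:R).
by have := cg_le0 t tJ; rewrite (negbTE ts) mulr0 subr0; lra.
Qed.

(* Induction on the height of [a] at [x]: reflecting in a simple root [s] with
   [(a, s) > 0] lowers the height and stays in the cone of [J], unless [a] is a
   multiple of [s]. *)
Lemma cone_simple_sub_mem a : a \in Phi -> cone J a -> a \in Psi.
Proof.
have [N] := ubnP (below a); elim: N a => // N IH a; rewrite ltnS => aN aPhi [c [c0 ac]].
have [s sJ csa] : exists2 s, s \in J & 0 < c s * dot a s.
  by apply: sumr_gt0_has; rewrite -dot_lc -ac dot_gt0 ?root_neq0.
have cs : 0 < c s by rewrite lt0r c0 // andbT; apply: contraTneq csa => ->; rewrite mul0r ltxx.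
have as_gt0 : 0 < dot a s by rewrite -(pmulr_rgt0 _ cs).
have [[t tJ /andP[ts ct]]|single] := pselect (exists2 t, t \in J & (t != s) && (c t != 0)).
  have g_Phi : refl s a \in Phi := clPhi (J_Phi sJ) aPhi.
  have ct_gt0 : 0 < c t by rewrite lt0r ct c0.
  have g_cone : cone J (refl s a) := refl_cone aPhi sJ tJ ts ct_gt0 ac.
  have g_Psi : refl s a \in Psi.
    by apply: IH => //; apply: leq_trans aN; apply: below_refl.
  by rewrite -(reflK (root_neq0 (J_Phi sJ)) a); exact: clPsi (JPsi sJ) g_Psi.
have a_single : a = c s *: s.
  rewrite ac (lc_single uJ sJ) // => t tJ ts; apply/eqP; apply: contra_notT single => ct.
  by exists t; rewrite // ts.
have := root_pos_multiple redPhi (J_Phi sJ) _ cs; rewrite -a_single => /(_ aPhi) ->.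
exact: JPsi.
Qed.

End SubSimpleSystem.

Section LiftingPoint.
Context {R : realType} {n : nat}.
Notation E := 'rV[R]_n.

Lemma orthogonal_witness (Psi : seq E) (a : E) : a \notin <<Psi>>%VS ->
  exists p, (forall y, y \in Psi -> dot p y = 0) /\ dot p a != 0.
Proof.
move=> a_span; apply: contrapT => no_p; move/negP: a_span; apply.
pose M : 'M[R]_(size Psi, n) := \matrix_(i, j) (Psi`_i) 0 j.
have aK : a *m cokermx M = 0.
  apply/rowP => j; rewrite !mxE.
  pose p : E := \row_k cokermx M k j.
  have pPsi y : y \in Psi -> dot p y = 0.
    move=> yPsi; have yi : (index y Psi < size Psi)%N by rewrite index_mem.
    have := congr1 (fun A : 'M[R]_(size Psi, n) => A (Ordinal yi) j) (mulmx_coker M).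
    rewrite !mxE /= => <-; rewrite dotE; apply: eq_bigr => k _.
    by rewrite !mxE mulrC nth_index.
  have pa0 : dot p a = 0.
    by apply: contrapT => pa_neq0; apply: no_p; exists p; split=> //; apply/eqP.
  by rewrite -[RHS]pa0 dotE; apply: eq_bigr => k _; rewrite mulrC /p [in RHS]mxE.
have /submxP [D ->] : (a <= M)%MS by rewrite submxE aK.
rewrite mulmx_sum_row; apply: memv_suml => i _; apply: memvZ.
have -> : row i M = Psi`_i by apply/rowP => j; rewrite !mxE.
exact/memv_span/mem_nth.
Qed.

(* Induction on [L]: [p + t q] works for all [t] outside a finite set. *)
Lemma nonorthogonal_combination (V : E -> Prop) (L : seq E) :
  V 0 -> (forall u v, V u -> V v -> V (u + v)) -> (forall k v, V v -> V (k *: v)) ->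
  (forall a, a \in L -> exists p, V p /\ dot p a != 0) ->
  exists p, V p /\ forall a, a \in L -> dot p a != 0.
Proof.
move=> V0 VD VZ; elim: L => [|b L IH] VL; first by exists 0.
have [a aL|p [Vp pL]] := IH; first by apply: VL; rewrite inE aL orbT.
have [q [Vq qb]] := VL b (mem_head _ _).
have [t tB] := exists_notin_seq [seq - dot p a / dot q a | a <- b :: L].
exists (p + t *: q); split=> [|a aL]; first by apply: VD => //; apply: VZ.
rewrite dotDl dotZl; have [qa|qa] := eqVneq (dot q a) 0.
  rewrite qa mulr0 addr0; move: aL; rewrite inE => /orP[/eqP ab|]; last exact: pL.
  by move: qb; rewrite -ab qa eqxx.
apply: contraNneq tB => pqa; apply/mapP; exists a => //.
have tq : t * dot q a = - dot p a by apply/eqP; rewrite -addr_eq0 addrC pqa.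
by rewrite -tq mulfK.
Qed.

Lemma exists_small_scale (p y : E) (L : seq E) : (forall a, a \in L -> dot p a != 0) ->
  exists e, 0 < e /\ forall a, a \in L -> e * `|dot y a| < `|dot p a|.
Proof.
elim: L => [|b L IH] pL; first by exists 1.
have [a aL|e [e0 he]] := IH; first by apply: pL; rewrite inE aL orbT.
have pb : 0 < `|dot p b| by rewrite normr_gt0 pL ?mem_head.
have yb : 0 < `|dot y b| + 1 by rewrite ltr_wpDl.
pose e' := Num.min e (`|dot p b| / (`|dot y b| + 1)).
have e'0 : 0 < e' by rewrite lt_min e0 divr_gt0.
exists e'; split=> // a; rewrite inE => /orP[/eqP ->|aL].
  have : e' * (`|dot y b| + 1) <= `|dot p b| by rewrite -ler_pdivlMr // ge_min lexx orbT.
  have : e' * `|dot y b| < e' * (`|dot y b| + 1) by rewrite ltr_pM2l // ltrDl.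
  exact: lt_le_trans.
by apply: le_lt_trans (he a aL); rewrite ler_wpM2r // ge_min lexx.
Qed.

(* [x = p + e y] with [e > 0] small. *)
Lemma exists_lifting_point (Phi Psi : seq E) y : saturated Phi Psi -> regular Psi y ->
  exists x p, [/\ regular Phi x, (forall a, a \in Psi -> dot p a = 0),
    (forall a, a \in Phi -> a \notin Psi -> 0 < dot x a -> 0 < dot p a) &
    (forall a, a \in Psi -> (0 < dot x a) = (0 < dot y a))].
Proof.
move=> sat ry; pose L := [seq a <- Phi | a \notin Psi].
have [p [pPsi pL]] : exists p, (forall a, a \in Psi -> dot p a = 0) /\
    forall a, a \in L -> dot p a != 0.
  apply: nonorthogonal_combination => [a _|u v hu hv a aPsi|k v hv a aPsi|a].
  - exact: dot0l.
  - by rewrite dotDl hu ?hv ?addr0.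
  - by rewrite dotZl hv ?mulr0.
  rewrite mem_filter => /andP[aPsi aPhi]; apply: orthogonal_witness.
  by apply: contra aPsi => /(sat a aPhi).1.
have [e [e0 he]] := exists_small_scale y pL.
have dx a : dot (p + e *: y) a = dot p a + e * dot y a by rewrite dotDl dotZl.
have xPsi a : a \in Psi -> dot (p + e *: y) a = e * dot y a.
  by move=> aPsi; rewrite dx pPsi ?add0r.
have dominant a : a \in Phi -> a \notin Psi -> `|e * dot y a| < `|dot p a|.
  by move=> aPhi aPsi; rewrite normrM gtr0_norm // he // mem_filter aPsi.
exists (p + e *: y), p; split=> // [a aPhi|a aPhi aPsi|a aPsi].
- have [aPsi|aPsi] := boolP (a \in Psi).
    by rewrite xPsi // mulf_neq0 ?(ry a aPsi) // gt_eqF.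
  by rewrite dx addr_neq0_dominant ?dominant.
- by rewrite dx => /(addr_gt0_dominant (dominant a aPhi aPsi)).
- by rewrite xPsi // pmulr_rgt0.
Qed.

End LiftingPoint.

Section SimpleSystemLift.
Context {R : realType} {n : nat}.
Notation E := 'rV[R]_n.
Variables (Phi Psi S J : seq E) (x y p : E).
Hypotheses (redPhi : reduced Phi) (PsiPhi : {subset Psi <= Phi}).
Hypotheses (sS : simple_system Phi S) (xS : forall s, s \in S -> 0 < dot x s).
Hypotheses (sJ : simple_system Psi J) (yJ : forall j, j \in J -> 0 < dot y j).
Hypotheses (pPsi : forall a, a \in Psi -> dot p a = 0)
  (p_out : forall a, a \in Phi -> a \notin Psi -> 0 < dot x a -> 0 < dot p a)
  (xy : forall a, a \in Psi -> (0 < dot x a) = (0 < dot y a)).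

(* Pairing [a = sum c_s s] with [p] gives a sum of nonnegative terms equal to
   [(p, a) = 0], so only simple roots lying in [Psi] occur in [a]. *)
Lemma simple_system_sub : {subset J <= S}.
Proof.
move=> a aJ; case: (sJ) => JPsi fJ _; case: (sS) => SPhi _ _.
have aPsi := JPsi a aJ; have aPhi := PsiPhi aPsi.
have [c [c0 ac]] : cone S a by apply: simple_system_cone sS xS aPhi _; rewrite xy ?yJ.
have term_ge0 s : s \in S -> 0 <= c s * dot p s.
  move=> sS'; have [sPsi|sPsi] := boolP (s \in Psi); first by rewrite pPsi ?mulr0.
  by rewrite mulr_ge0 ?c0 // ltW // p_out ?SPhi ?xS.
have c_out s : s \in S -> s \notin Psi -> c s = 0.
  move=> sS' sPsi; have sum0 : \sum_(t <- S) c t * dot p t = 0 by rewrite -dot_lc -ac pPsi.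
  have /eqP := psumr_seq_eq0 term_ge0 sum0 sS'.
  by rewrite mulf_eq0 (gt_eqF (p_out (SPhi s sS') sPsi (xS sS'))) orbF => /eqP.
have Scone s : s \in S -> 0 < c s -> cone J s.
  move=> sS' cs; have sPsi : s \in Psi.
    by apply: contraTT cs => sPsi; rewrite c_out ?ltxx.
  by apply: (simple_system_cone sJ yJ sPsi); rewrite -xy // xS.
have [s sS' [k k0 ska]] := simplicial_extreme_ray fJ aJ ac c0 Scone.
by rewrite -(root_pos_multiple redPhi aPhi _ k0) -?ska ?SPhi.
Qed.

End SimpleSystemLift.

Section Lifting.
Context {R : realType} {n : nat}.
Notation E := 'rV[R]_n.

Lemma saturated_lifts (Phi Psi : seq E) : root_system Phi -> root_subsystem Phi Psi ->
  saturated Phi Psi -> forall D, Ch Psi D -> exists C, Ch Phi C /\ lifts Phi Psi C D.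
Proof.
move=> [_ clPhi redPhi] [_ PsiPhi clPsi] sat _ [y [ry ->]].
have [x [p [rx pPsi p_out xy]]] := exists_lifting_point sat ry.
exists (connected_component (regular Phi) x); split; first by exists x.
have [sS xS] := simple_seq_spec clPhi rx; have [sJ yJ] := simple_seq_spec clPsi ry.
by move=> a; apply: (simple_system_sub redPhi PsiPhi sS xS sJ yJ pPsi p_out xy).
Qed.

Lemma lifts_saturated (Phi Psi : seq E) C D : root_system Phi -> root_subsystem Phi Psi ->
  Ch Phi C -> Ch Psi D -> lifts Phi Psi C D -> saturated Phi Psi.
Proof.
move=> [Phi0 clPhi redPhi] [_ PsiPhi clPsi] [x [rx ->]] [y [ry ->]] lift.
have [sS xS] := simple_seq_spec clPhi rx; have [sJ _] := simple_seq_spec clPsi ry.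
set S := simple_seq Phi _ in sS xS lift; set J := simple_seq Psi _ in sJ lift.
have JS : {subset J <= S} by move=> a; apply: lift.
case: (sJ) => JPsi fJ _; have uJ := free_uniq fJ.
have sub_mem := cone_simple_sub_mem Phi0 clPhi redPhi clPsi sS xS uJ JS JPsi.
move=> a aPhi; split=> [a_span|/memv_span //].
have [d ad] := span_lc uJ (subvP (simple_system_span sJ) a a_span).
have a_neq0 : a != 0 by apply: contraTneq aPhi => ->.
have [d_ge0|d_le0] := simple_system_sub_coherent sS uJ JS aPhi ad.
  by apply: sub_mem; last by exists d.
rewrite -[a]opprK; apply: refl_closedN; rewrite ?oppr_eq0 //.
apply: sub_mem; first exact: refl_closedN.
by exists (fun j => - d j); rewrite lcN -ad; split=> // j /d_le0; rewrite oppr_ge0.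
Qed.

End Lifting.

Theorem theorem1 (R : realType) (n : nat) (Phi Psi : seq 'rV[R]_n) :
  root_system Phi -> root_subsystem Phi Psi ->
  (saturated Phi Psi ->
     forall D, Ch Psi D -> exists C, Ch Phi C /\ lifts Phi Psi C D) /\
  ((exists C D, [/\ Ch Phi C, Ch Psi D & lifts Phi Psi C D]) ->
     saturated Phi Psi).
Proof.
move=> rootPhi subPsi; split; first exact: saturated_lifts.
by move=> [C [D [CPhi DPsi lift]]]; apply: lifts_saturated lift.
Qed.
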